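(* Let $G=(V,E)$ be an undirected graph with layers $L_0, L_1, L_2, L_{\geq 2}$ and quantities $d^+, d^-, rs$ as in the context, and let $0<\varepsilon<1$. Let $\bar\ell_{\geq 2}$ be the output of the procedure Estimate-Periphery-Size (see context) run with $$s_1 = \Theta\!\left(\frac{d^+_{\max}(L_1)}{\varepsilon^2\, d^+_{avg}(L_1)}\right), \qquad s_{\geq 2} = \Theta\!\left(\frac{c_{rs}\cdot d^-_{\max}(L_{\geq 2})}{\varepsilon^2\, d^-_{avg}(L_{\geq 2})}\right).$$ Then with high constant probability, $\bar\ell_{\geq 2} \in [(1-\varepsilon)|L_{\geq 2}|, (1+\varepsilon)|L_{\geq 2}|]$.
   Context: Given $L_0 \subseteq V$, let $L_1 = \bigcup_{v\in L_0}N(v)\setminus L_0$, $L_2$ the set of nodes at distance exactly $2$ from $L_0$, and $L_{\geq 2} = V\setminus(L_0\cup L_1)$. For $v\in L_1$, $d^+(v)$ is its number of neighbors in $L_2$; for $v\in L_2$, $d^-(v)$ is its number of neighbors in $L_1$; for $v\in L_{\geq 2}\setminus L_2$, $d^-(v)=0$. For a set $R$: $d^+_{avg}(R) = \frac{1}{|R|}\sum_{v\in R}d^+(v)$, $d^+_{\max}(R)=\max_{v\in R}d^+(v)$, and analogously $d^-_{avg}(R)$, $d^-_{\max}(R)$. Each $v\in L_{\geq 2}$ has a reachability score $rs(v)>0$, and the procedure Reach returns a node of $L_{\geq 2}$ (together with its score) such that each $v\in L_{\geq 2}$ is returned with probability $rs(v)/\sum_{u\in L_{\geq 2}}rs(u)$,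 independently across calls. Let $rs_{avg}(L_{\geq 2}) = \frac{1}{|L_{\geq 2}|}\sum_{v\in L_{\geq 2}}rs(v)$, $rs_{\min}(L_{\geq 2}) = \min_{v\in L_{\geq 2}}rs(v)$, and $c_{rs} = rs_{avg}(L_{\geq 2})/rs_{\min}(L_{\geq 2})$. Estimate-Periphery-Size: draw $s_1$ uniform independent nodes $S_1$ from $L_1$ and set $\bar d^+ = \frac{1}{s_1}\sum_{v\in S_1}d^+(v)$; draw $s_{\geq 2}$ nodes $S_2$ by independent calls to Reach and set $\bar d^- = \left(\sum_{v\in S_2}\frac{d^-(v)}{rs(v)}\right)\big/\left(\sum_{v\in S_2}\frac{1}{rs(v)}\right)$; output $\bar\ell_{\geq 2} = |L_1|\cdot \bar d^+/\bar d^-$. ''With high constant probability'' means with probability at least a fixed constant close to $1$ (determined by the hidden constants in $\Theta$). *)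

From HB Require Import structures.
From mathcomp Require Import all_boot all_order all_algebra.
From mathcomp Require Import reals.
Set Implicit Arguments. Unset Strict Implicit. Unset Printing Implicit Defensive.
Import Order.TTheory GRing.Theory Num.Theory.
Local Open Scope ring_scope.

Section Layers.
Variables (V : finType) (e : rel V) (L0 : {set V}).

Definition L1 : {set V} := [set u | (u \notin L0) && [exists v in L0, e v u]].
Definition Lge2 : {set V} := ~: (L0 :|: L1).
(* L_2 = nodes at distance exactly 2 from L_0 = nodes of L_{>=2} adjacent to L_1 *)
Definition L2 : {set V} := [set v in Lge2 | [exists u in L1, e u v]].

Definition dplus (v : V) : nat := #|[set u in L2 | e v u]|.
Definition dminus (v : V) : nat :=
  if v \in L2 then #|[set u in L1 | e u v]| else 0%N.
End Layers.

Section Stats.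
Variables (R : realType) (V : finType).

Definition avg_nat (f : V -> nat) (A : {set V}) : R :=
  (\sum_(v in A) f v)%:R / #|A|%:R.
Definition max_nat (f : V -> nat) (A : {set V}) : nat := \max_(v in A) f v.

Definition rs_avg (rs : V -> R) (A : {set V}) : R :=
  (\sum_(v in A) rs v) / #|A|%:R.
(* minimum of rs over A; the seed rs_avg is >= every value's minimum, so for
   nonempty A this is exactly min_{v in A} rs v *)
Definition rs_min (rs : V -> R) (A : {set V}) : R :=
  \big[Num.min/rs_avg rs A]_(v in A) rs v.
Definition c_rs (rs : V -> R) (A : {set V}) : R := rs_avg rs A / rs_min rs A.
End Stats.

Section Estimator.
Variables (R : realType) (V : finType) (e : rel V) (L0 : {set V}) (rs : V -> R).

Definition p_unif (v : V) : R :=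
  if v \in L1 e L0 then 1 / #|L1 e L0|%:R else 0.
Definition p_reach (v : V) : R :=
  if v \in Lge2 e L0 then rs v / (\sum_(w in Lge2 e L0) rs w) else 0.

Definition estimate (s1 s2 : nat) (S1 : {ffun 'I_s1 -> V}) (S2 : {ffun 'I_s2 -> V}) : R :=
  let dbar_plus := (\sum_(i < s1) (dplus e L0 (S1 i))%:R) / s1%:R in
  let dbar_minus := (\sum_(j < s2) (dminus e L0 (S2 j))%:R / rs (S2 j))
                    / (\sum_(j < s2) 1 / rs (S2 j)) in
  #|L1 e L0|%:R * dbar_plus / dbar_minus.

(* probability (over s1 iid uniform draws from L_1 and s2 iid independent
   Reach draws) that the estimate lies in [(1-eps)|L_{>=2}|, (1+eps)|L_{>=2}|] *)
Definition success_prob (eps : R) (s1 s2 : nat) : R :=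
  \sum_(S1 : {ffun 'I_s1 -> V}) \sum_(S2 : {ffun 'I_s2 -> V})
    ((\prod_(i < s1) p_unif (S1 i)) * (\prod_(j < s2) p_reach (S2 j)) *
     (if ((1 - eps) * #|Lge2 e L0|%:R <= @estimate s1 s2 S1 S2)
         && (@estimate s1 s2 S1 S2 <= (1 + eps) * #|Lge2 e L0|%:R)
      then 1 else 0)).
End Estimator.

From HB Require Import structures.
From mathcomp Require Import all_boot all_order all_algebra.
From mathcomp Require Import reals.
From mathcomp Require Import ring lra.
Set Implicit Arguments. Unset Strict Implicit. Unset Printing Implicit Defensive.
Import Order.TTheory GRing.Theory Num.Theory.
Local Open Scope ring_scope.

(* Counting the edges between L_1 and L_2 from both ends shows that
   |L_{>=2}| = |L_1| E[d^+] E[1/rs] / E[d^-/rs], with d^+ taken under the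
   uniform distribution on L_1 and the other two under the Reach
   distribution; the estimator replaces each expectation by an empirical mean.
   Since d^+ <= d^+_max on L_1, the relative variance E[X^2]/E[X]^2 of d^+ is at
   most d^+_max / d^+_avg, and likewise that of d^-/rs and of 1/rs is at most
   c_rs d^-_max / d^-_avg.  With the given sample sizes Chebyshev's inequality
   therefore puts each empirical mean within relative error eps/5 of its
   expectation, except with probability delta/3, and three relative errors
   eps/5 combine into a relative error at most eps for the ratio. *)

Section ProductMeasure.
Variable R : comPzRingType.

Definition expect (T : finType) (p f : T -> R) : R := \sum_x p x * f x.

Definition iid (V : finType) (p : V -> R) (n : nat) : {ffun 'I_n -> V} -> R :=
  fun S => \prod_i p (S i).
Arguments iid {V} p n.

Lemma eq_expect (T : finType) (p f g : T -> R) :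
  f =1 g -> expect p f = expect p g.
Proof. by move=> fg; apply: eq_bigr => x _; rewrite fg. Qed.

Lemma expect_mulr (T : finType) (q f : T -> R) (c : R) :
  expect q (fun x => f x * c) = expect q f * c.
Proof. by rewrite /expect mulr_suml; apply: eq_bigr => x _; rewrite mulrA. Qed.

Lemma expect_sum (T I : finType) (p : T -> R) (F : I -> T -> R) :
  expect p (fun x => \sum_i F i x) = \sum_i expect p (F i).
Proof. by rewrite exchange_big; apply: eq_bigr => x _; rewrite mulr_sumr. Qed.

Lemma expect_mask (T : finType) (A : {set T}) (c f : T -> R) :
  expect (fun x => if x \in A then c x else 0) f = \sum_(x in A) c x * f x.
Proof. by rewrite [RHS]big_mkcond; apply: eq_bigr => x _; case: ifP; rewrite ?mul0r. Qed.

Lemma prod_if_eq (I : finType) (i : I) (a : I -> R) :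
  \prod_k (if k == i then a k else 1) = a i.
Proof. by rewrite -big_mkcond big_pred1_eq. Qed.

Lemma prod_if_eq2 (I : finType) (i j : I) (a b : I -> R) : i != j ->
  \prod_k (if k == i then a k else if k == j then b k else 1) = a i * b j.
Proof.
move=> ij; rewrite (bigD1 i) //= eqxx (bigD1 j) 1?eq_sym //= (negbTE ij) eqxx.
by rewrite big1 ?mulr1 // => k /andP[ki kj]; rewrite (negbTE ki) (negbTE kj).
Qed.

Variables (V : finType) (p : V -> R).
Hypothesis sum_p : \sum_v p v = 1.

Lemma expect_cst1 : expect p (fun _ => 1) = 1.
Proof. by rewrite -[RHS]sum_p; apply: eq_bigr => v _; rewrite mulr1. Qed.

Lemma sum_iid n : \sum_S iid p n S = 1.
Proof.
rewrite -(bigA_distr_bigA (fun (_ : 'I_n) => p)) /= sum_p.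
by rewrite prodr_const expr1n.
Qed.

Lemma expect_iid_prod n (F : 'I_n -> V -> R) :
  expect (iid p n) (fun S => \prod_i F i (S i)) = \prod_i expect p (F i).
Proof. by rewrite bigA_distr_bigA; apply: eq_bigr => S _; rewrite big_split. Qed.

Lemma expect_iid_coord n (i : 'I_n) (u : V -> R) :
  expect (iid p n) (fun S => u (S i)) = expect p u.
Proof.
have := expect_iid_prod (fun k v => if k == i then u v else 1).
rewrite (eq_bigr (fun k => if k == i then expect p u else 1)); last first.
  by move=> k _; case: eqP => // _; rewrite expect_cst1.
rewrite prod_if_eq => <-; apply: eq_expect => S /=.
by rewrite (prod_if_eq i (fun k => u (S k))).
Qed.

Lemma expect_iid_coord2 n (i j : 'I_n) (u w : V -> R) : i != j ->
  expect (iid p n) (fun S => u (S i) * w (S j)) = expect p u * expect p w.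
Proof.
move=> ij.
have := expect_iid_prod (fun k v => if k == i then u v else if k == j then w v else 1).
rewrite (eq_bigr (fun k => if k == i then expect p u
                           else if k == j then expect p w else 1)); last first.
  by move=> k _; case: eqP => // _; case: eqP => // _; rewrite expect_cst1.
rewrite prod_if_eq2 // => <-; apply: eq_expect => S /=.
by rewrite (prod_if_eq2 (fun k => u (S k)) (fun k => w (S k))).
Qed.

Lemma expect_iid_sum_sq n (g : V -> R) : expect p g = 0 ->
  expect (iid p n) (fun S => (\sum_i g (S i)) ^+ 2) =
  n%:R * expect p (fun v => g v ^+ 2).
Proof.
move=> Eg0.
transitivity (expect (iid p n) (fun S => \sum_i \sum_j g (S i) * g (S j))).
  by apply: eq_expect => S; rewrite expr2 mulr_suml; apply: eq_bigr => i _; rewrite mulr_sumr.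
rewrite expect_sum (eq_bigr (fun _ => expect p (fun v => g v ^+ 2))).
  by rewrite sumr_const card_ord mulr_natl.
move=> i _; rewrite expect_sum (bigD1 i) //= big1 ?addr0.
  by rewrite (expect_iid_coord i (fun v => g v ^+ 2)).
by move=> j ji; rewrite expect_iid_coord2 1?eq_sym // Eg0 mul0r.
Qed.

Lemma expect_centered (f : V -> R) : expect p (fun v => f v - expect p f) = 0.
Proof.
set m := expect p f; rewrite {1}/expect (eq_bigr (fun v => p v * f v - m * p v)).
  by rewrite sumrB -mulr_sumr sum_p mulr1 subrr.
by move=> v _; rewrite mulrBr [m * _]mulrC.
Qed.

Lemma expect_centered_sq (f : V -> R) :
  expect p (fun v => (f v - expect p f) ^+ 2) =
  expect p (fun v => f v ^+ 2) - expect p f ^+ 2.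
Proof.
set m := expect p f; rewrite {1}/expect.
rewrite (eq_bigr (fun v => p v * f v ^+ 2 - 2 * m * (p v * f v) + m ^+ 2 * p v)).
  rewrite big_split sumrB /= -!mulr_sumr sum_p.
  by rewrite -/(expect p f) -[expect p f]/m -/(expect p (fun v => f v ^+ 2)); ring.
by move=> v _; ring.
Qed.

End ProductMeasure.
Arguments iid {R V} p n.

Lemma expect_le (R : realDomainType) (T : finType) (p f g : T -> R) :
  (forall x, 0 <= p x) -> (forall x, f x <= g x) -> expect p f <= expect p g.
Proof. by move=> p_ge0 fg; apply: ler_sum => x _; rewrite ler_wpM2l. Qed.

Lemma expect_sq_le (R : realDomainType) (T : finType) (p f : T -> R) (M : R) :
  (forall x, 0 <= p x) -> (forall x, p x != 0 -> 0 <= f x <= M) ->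
  expect p (fun x => f x ^+ 2) <= M * expect p f.
Proof.
move=> p_ge0 f_bnd; rewrite /expect mulr_sumr; apply: ler_sum => x _.
have [->|/f_bnd/andP[f_ge0 f_le]] := eqVneq (p x) 0; first by rewrite !mul0r mulr0.
by rewrite expr2 mulrCA ler_wpM2r ?mulr_ge0.
Qed.

Lemma expect_prod_ge_union (R : realDomainType) (I J : finType) (P : I -> R) (Q : J -> R)
    (a : I -> R) (b c : J -> R) (F : I -> J -> R) :
  \sum_i P i = 1 -> \sum_j Q j = 1 -> (forall i, 0 <= P i) -> (forall j, 0 <= Q j) ->
  (forall i j, 1 - a i - b j - c j <= F i j) ->
  1 - expect P a - expect Q b - expect Q c <= \sum_i \sum_j P i * Q j * F i j.
Proof.
move=> sumP sumQ P_ge0 Q_ge0 F_ge.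
have inner i : \sum_j P i * Q j * (1 - a i - b j - c j) =
    P i - P i * a i - P i * expect Q b - P i * expect Q c.
  transitivity (\sum_j ((P i - P i * a i) * Q j - P i * (Q j * b j) - P i * (Q j * c j))).
    by apply: eq_bigr => j _; ring.
  by rewrite !sumrB -!mulr_sumr sumQ mulr1.
have -> : 1 - expect P a - expect Q b - expect Q c =
    \sum_i \sum_j P i * Q j * (1 - a i - b j - c j).
  by rewrite (eq_bigr _ (fun i _ => inner i)) !sumrB -!mulr_suml sumP !mul1r.
by apply: ler_sum => i _; apply: ler_sum => j _; rewrite ler_wpM2l ?mulr_ge0.
Qed.

Lemma rel_err_le (R : realFieldType) (X N a : R) :
  0 < N -> ~~ (a * N < `|X - N|) -> `|X / N - 1| <= a.
Proof.
move=> N_gt0; rewrite -leNgt => dev.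
have -> : X / N - 1 = (X - N) / N by field; rewrite gt_eqF.
by rewrite normrM normfV (gtr0_norm N_gt0) ler_pdivrMr.
Qed.

Lemma ratio_rel_err (R : realFieldType) (eps x y z : R) : 0 < eps < 1 ->
  `|x - 1| <= eps / 5 -> `|y - 1| <= eps / 5 -> `|z - 1| <= eps / 5 ->
  1 - eps <= x * z / y <= 1 + eps.
Proof.
move=> /andP[eps_gt0 eps_lt1]; rewrite !ler_norml.
move=> /andP[x_lo x_hi] /andP[y_lo y_hi] /andP[z_lo z_hi].
have y_gt0 : 0 < y by lra.
by rewrite ler_pdivlMr // ler_pdivrMr //; apply/andP; split; nra.
Qed.

Lemma ratio_estimate_in_range (R : realFieldType)
    (eps m m1 s1 s2 X1 XN XD mu1 mu2 mu3 : R) :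
  0 < eps < 1 -> 0 <= m -> 0 < s1 -> 0 < s2 -> 0 < mu1 -> 0 < mu2 -> 0 < mu3 ->
  m = m1 * mu1 * mu3 / mu2 ->
  `|X1 / (s1 * mu1) - 1| <= eps / 5 -> `|XN / (s2 * mu2) - 1| <= eps / 5 ->
  `|XD / (s2 * mu3) - 1| <= eps / 5 ->
  (1 - eps) * m <= m1 * (X1 / s1) / (XN / XD) <= (1 + eps) * m.
Proof.
move=> eps01 m_ge0 s1_gt0 s2_gt0 mu1_gt0 mu2_gt0 mu3_gt0 mE x_close y_close z_close.
have /andP[lo hi] := ratio_rel_err eps01 x_close y_close z_close.
have /andP[_ eps_lt1] := eps01.
have XN_gt0 : 0 < XN.
  move: y_close; rewrite ler_norml => /andP[y_lo _].
  suff : 0 < XN / (s2 * mu2) by rewrite pmulr_lgt0 // invr_gt0 mulr_gt0.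
  lra.
have XD_gt0 : 0 < XD.
  move: z_close; rewrite ler_norml => /andP[z_lo _].
  suff : 0 < XD / (s2 * mu3) by rewrite pmulr_lgt0 // invr_gt0 mulr_gt0.
  lra.
have -> : m1 * (X1 / s1) / (XN / XD) =
          m * (X1 / (s1 * mu1) * (XD / (s2 * mu3)) / (XN / (s2 * mu2))).
  by rewrite mE; field; rewrite !gt_eqF.
by rewrite ![_ * m]mulrC !ler_wpM2l.
Qed.

Section Chebyshev.
Variables (R : realFieldType) (V : finType) (p : V -> R).
Hypotheses (sum_p : \sum_v p v = 1) (p_ge0 : forall v, 0 <= p v).

Lemma iid_ge0 n (S : {ffun 'I_n -> V}) : 0 <= iid p n S.
Proof. exact: prodr_ge0. Qed.

Lemma sqr_expect_le (f : V -> R) : expect p f ^+ 2 <= expect p (fun v => f v ^+ 2).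
Proof.
rewrite -subr_ge0 -expect_centered_sq //.
by apply: sumr_ge0 => v _; rewrite mulr_ge0 ?sqr_ge0.
Qed.

Lemma iid_chebyshev n (f : V -> R) (t : R) : 0 < t ->
  expect (iid p n)
    (fun S => if t < `|\sum_i f (S i) - n%:R * expect p f| then 1 else 0)
  <= n%:R * expect p (fun v => f v ^+ 2) / t ^+ 2.
Proof.
move=> t_gt0; have t2_gt0 : 0 < t ^+ 2 by rewrite exprn_gt0.
set mu := expect p f.
apply: (@le_trans _ _
    (expect (iid p n) (fun S => (\sum_i (f (S i) - mu)) ^+ 2 / t ^+ 2))).
  apply: expect_le => [S|S]; first exact: iid_ge0.
  rewrite sumrB sumr_const card_ord mulr_natl.
  set X := (X in `|X|).
  case: ifP => [dev|_]; last by rewrite divr_ge0 ?sqr_ge0 // ltW.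
  rewrite ler_pdivlMr // mul1r -[X ^+ 2](real_normK (num_real X)).
  by apply: lerXn2r; rewrite ?nnegrE ?normr_ge0 ?(ltW t_gt0) ?(ltW dev).
rewrite expect_mulr (expect_iid_sum_sq sum_p n (expect_centered sum_p f)).
rewrite ler_wpM2r ?invr_ge0 ?(ltW t2_gt0) // ler_wpM2l ?ler0n //.
by rewrite expect_centered_sq // lerBlDr lerDl sqr_ge0.
Qed.

Definition rel_dev_prob n (f : V -> R) (a : R) : R :=
  expect (iid p n) (fun S =>
    if a * (n%:R * expect p f) < `|\sum_i f (S i) - n%:R * expect p f| then 1 else 0).

Section RelativeDeviation.
Variables (a b K : R) (n : nat) (f : V -> R).
Hypotheses (a_gt0 : 0 < a) (b_gt0 : 0 < b) (Ef_gt0 : 0 < expect p f).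
Hypothesis Ef2_le : expect p (fun v => f v ^+ 2) <= K * expect p f ^+ 2.
Hypothesis n_ge : K / (a ^+ 2 * b) <= n%:R.

Lemma rel_dev_sample_gt0 : 0 < n%:R :> R.
Proof.
have Ef2_gt0 : 0 < expect p f ^+ 2 by rewrite exprn_gt0.
have K_ge1 : 1 <= K.
  by rewrite -(ler_pM2r Ef2_gt0) mul1r (le_trans (sqr_expect_le f)).
by apply: lt_le_trans n_ge; rewrite divr_gt0 ?mulr_gt0 ?exprn_gt0 // (lt_le_trans ltr01).
Qed.

Lemma rel_dev_prob_le : rel_dev_prob n f a <= b.
Proof.
have n_gt0 := rel_dev_sample_gt0.
have t_gt0 : 0 < a * (n%:R * expect p f) by rewrite !mulr_gt0.
apply: le_trans (iid_chebyshev n f t_gt0) _.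
rewrite ler_pdivrMr ?exprn_gt0 //.
have K_le : K <= n%:R * (a ^+ 2 * b) by rewrite -ler_pdivrMr ?mulr_gt0 ?exprn_gt0.
apply: le_trans (ler_wpM2l (ltW n_gt0) Ef2_le) _.
have -> : b * (a * (n%:R * expect p f)) ^+ 2 =
          n%:R * (n%:R * (a ^+ 2 * b) * expect p f ^+ 2) by ring.
by rewrite ler_wpM2l ?(ltW n_gt0) // ler_wpM2r ?sqr_ge0.
Qed.

End RelativeDeviation.
End Chebyshev.

Lemma card_set_sep (V : finType) (A : {set V}) (P : pred V) :
  #|[set w in A | P w]| = (\sum_(w in A) P w)%N.
Proof.
rewrite -sum1_card [LHS]big_mkcond [RHS]big_mkcond /=.
by apply: eq_bigr => w _; rewrite inE; case: (w \in A); case: (P w).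
Qed.

Lemma sum_dplus_eq_sum_dminus (V : finType) (e : rel V) (L0 : {set V}) :
  (\sum_(u in L1 e L0) dplus e L0 u = \sum_(w in Lge2 e L0) dminus e L0 w)%N.
Proof.
have -> : (\sum_(w in Lge2 e L0) dminus e L0 w =
           \sum_(w in L2 e L0) #|[set u in L1 e L0 | e u w]|)%N.
  rewrite big_mkcond [RHS]big_mkcond /=; apply: eq_bigr => w _.
  rewrite /dminus; have [wL2|_] := boolP (w \in L2 e L0); last by case: ifP.
  by move: wL2; rewrite inE => /andP[->].
rewrite /dplus; under eq_bigr do rewrite card_set_sep.
by under [RHS]eq_bigr do rewrite card_set_sep; rewrite exchange_big.
Qed.

Lemma sum_le_card_max_nat (V : finType) (f : V -> nat) (A : {set V}) :
  (\sum_(v in A) f v <= #|A| * max_nat f A)%N.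
Proof. by rewrite -sum_nat_const; apply: leq_sum => v vA; apply: leq_bigmax_cond. Qed.

Section Periphery.
Variables (R : realType) (V : finType) (e : rel V) (L0 : {set V}) (rs : V -> R).

Local Notation L1 := (L1 e L0).
Local Notation Lge2 := (Lge2 e L0).
Local Notation dplus := (dplus e L0).
Local Notation dminus := (dminus e L0).
Local Notation p_unif := (p_unif R e L0).
Local Notation p_reach := (p_reach e L0 rs).
Local Notation dplusR := (fun v => (dplus v)%:R : R).
Local Notation dminus_rs := (fun v => (dminus v)%:R / rs v).
Local Notation inv_rs := (fun v => 1 / rs v).
Local Notation sum_rs := (\sum_(v in Lge2) rs v).
Local Notation K1 := ((max_nat dplus L1)%:R / avg_nat R dplus L1).
Local Notation K2 :=
  (c_rs rs Lge2 * (max_nat dminus Lge2)%:R / avg_nat R dminus Lge2).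

Hypotheses (rs_gt0 : forall v, v \in Lge2 -> 0 < rs v) (Lge2_neq0 : Lge2 != set0).
Hypotheses (avg_dplus_gt0 : 0 < avg_nat R dplus L1)
           (avg_dminus_gt0 : 0 < avg_nat R dminus Lge2).

Lemma card_L1_gt0 : 0 < #|L1|%:R :> R.
Proof.
move: avg_dplus_gt0; rewrite ltr0n lt0n /avg_nat.
by apply: contraTneq => ->; rewrite invr0 mulr0 ltxx.
Qed.

Lemma card_Lge2_gt0 : 0 < #|Lge2|%:R :> R.
Proof. by rewrite ltr0n card_gt0. Qed.

Lemma sum_rs_gt0 : 0 < sum_rs.
Proof.
have [w wL] := set0Pn _ Lge2_neq0.
rewrite (bigD1 w) //= ltr_pwDl ?rs_gt0 //.
by apply: sumr_ge0 => v /andP[vL _]; exact: ltW (rs_gt0 vL).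
Qed.

Lemma rs_min_gt0 : 0 < rs_min rs Lge2.
Proof.
apply: lt_bigmin => //; rewrite /rs_avg divr_gt0 ?sum_rs_gt0 ?card_Lge2_gt0 //.
Qed.

Lemma rs_min_le v : v \in Lge2 -> rs_min rs Lge2 <= rs v.
Proof. exact: bigmin_le_cond. Qed.

Lemma sum_dminus_gt0 : 0 < (\sum_(v in Lge2) dminus v)%:R :> R.
Proof. by move: avg_dminus_gt0; rewrite /avg_nat pmulr_lgt0 // invr_gt0 card_Lge2_gt0. Qed.

Lemma p_unif_ge0 v : 0 <= p_unif v.
Proof. by rewrite /p_unif; case: ifP => // _; rewrite divr_ge0 ?ler0n. Qed.

Lemma sum_p_unif : \sum_v p_unif v = 1.
Proof.
rewrite /p_unif -big_mkcond /= sumr_const -[_ *+ _]mulr_natr mul1r mulVf //.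
by rewrite gt_eqF ?card_L1_gt0.
Qed.

Lemma p_reach_ge0 v : 0 <= p_reach v.
Proof.
rewrite /p_reach; case: ifP => // vL.
by rewrite divr_ge0 ?ltW ?rs_gt0 ?sum_rs_gt0.
Qed.

Lemma sum_p_reach : \sum_v p_reach v = 1.
Proof. by rewrite /p_reach -big_mkcond /= -mulr_suml divff // gt_eqF ?sum_rs_gt0. Qed.

Lemma expect_unif_dplus : expect p_unif dplusR = avg_nat R dplus L1.
Proof. by rewrite expect_mask -mulr_sumr -natr_sum mul1r mulrC. Qed.

Lemma expect_reach_dminus :
  expect p_reach dminus_rs = (\sum_(v in Lge2) dminus v)%:R / sum_rs.
Proof.
rewrite expect_mask natr_sum mulr_suml; apply: eq_bigr => v vL.
by field; rewrite !gt_eqF ?rs_gt0 ?sum_rs_gt0.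
Qed.

Lemma expect_reach_inv : expect p_reach inv_rs = #|Lge2|%:R / sum_rs.
Proof.
rewrite expect_mask -sum1_card natr_sum mulr_suml; apply: eq_bigr => v vL.
by field; rewrite !gt_eqF ?rs_gt0 ?sum_rs_gt0.
Qed.

Lemma card_Lge2_expect : #|Lge2|%:R =
  #|L1|%:R * expect p_unif dplusR * expect p_reach inv_rs / expect p_reach dminus_rs.
Proof.
rewrite expect_unif_dplus expect_reach_inv expect_reach_dminus /avg_nat.
rewrite sum_dplus_eq_sum_dminus.
by field; rewrite !gt_eqF ?card_L1_gt0 ?sum_rs_gt0 ?sum_dminus_gt0.
Qed.

Lemma expect_unif_dplus_gt0 : 0 < expect p_unif dplusR.
Proof. by rewrite expect_unif_dplus. Qed.

Lemma expect_reach_dminus_gt0 : 0 < expect p_reach dminus_rs.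
Proof. by rewrite expect_reach_dminus divr_gt0 ?sum_dminus_gt0 ?sum_rs_gt0. Qed.

Lemma expect_reach_inv_gt0 : 0 < expect p_reach inv_rs.
Proof. by rewrite expect_reach_inv divr_gt0 ?card_Lge2_gt0 ?sum_rs_gt0. Qed.

Lemma expect_unif_dplus_sq :
  expect p_unif (fun v => dplusR v ^+ 2) <= K1 * expect p_unif dplusR ^+ 2.
Proof.
apply: le_trans (expect_sq_le (M := (max_nat dplus L1)%:R) p_unif_ge0 _) _.
  move=> v; rewrite /p_unif; case: ifP => [vL _|_]; last by rewrite eqxx.
  by rewrite ler0n ler_nat leq_bigmax_cond.
by rewrite expect_unif_dplus expr2 [in X in _ <= X]mulrA divfK ?gt_eqF.
Qed.

Lemma expect_reach_dminus_sq :
  expect p_reach (fun v => dminus_rs v ^+ 2) <= K2 * expect p_reach dminus_rs ^+ 2.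
Proof.
apply: le_trans (expect_sq_le (M := (max_nat dminus Lge2)%:R / rs_min rs Lge2)
                              p_reach_ge0 _) _.
  move=> v; rewrite /p_reach; case: ifP => [vL _|_]; last by rewrite eqxx.
  rewrite divr_ge0 ?ler0n ?(ltW (rs_gt0 vL)) //=.
  apply: ler_pM; rewrite ?ler0n ?invr_ge0 ?(ltW (rs_gt0 vL)) ?ler_nat ?leq_bigmax_cond //.
  by rewrite lef_pV2 ?posrE ?rs_gt0 ?rs_min_gt0 ?rs_min_le.
rewrite expect_reach_dminus /c_rs /rs_avg /avg_nat le_eqVlt; apply/orP; left.
by apply/eqP; field; rewrite !gt_eqF ?card_Lge2_gt0 ?sum_rs_gt0 ?sum_dminus_gt0
                                 ?rs_min_gt0.
Qed.

Lemma expect_reach_inv_sq :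
  expect p_reach (fun v => inv_rs v ^+ 2) <= K2 * expect p_reach inv_rs ^+ 2.
Proof.
apply: le_trans (expect_sq_le (M := 1 / rs_min rs Lge2) p_reach_ge0 _) _.
  move=> v; rewrite /p_reach; case: ifP => [vL _|_]; last by rewrite eqxx.
  rewrite divr_ge0 ?ler01 ?(ltW (rs_gt0 vL)) //= ler_pM2l ?ltr01 //.
  by rewrite lef_pV2 ?posrE ?rs_gt0 ?rs_min_gt0 ?rs_min_le.
rewrite expect_reach_inv /c_rs /rs_avg /avg_nat.
set m := #|Lge2|%:R; set Sd := (\sum_(v in Lge2) dminus v)%:R.
set D := (max_nat dminus Lge2)%:R; set rmin := rs_min rs Lge2.
have rmin_gt0 : 0 < rmin := rs_min_gt0.
have m_gt0 : 0 < m := card_Lge2_gt0.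
have Sd_gt0 : 0 < Sd := sum_dminus_gt0.
have SdD : Sd <= m * D by rewrite -natrM ler_nat sum_le_card_max_nat.
have -> : sum_rs / m / rmin * D / (Sd / m) * (m / sum_rs) ^+ 2 =
          1 / rmin * (m / sum_rs) * (m * D / Sd).
  by field; rewrite !gt_eqF ?sum_rs_gt0.
rewrite ler_peMr ?ler_pdivlMr ?mul1r //.
by rewrite mulr_ge0 ?divr_ge0 ?ler01 ?invr_ge0 ?(ltW m_gt0) ?(ltW sum_rs_gt0) ?(ltW rmin_gt0).
Qed.

Lemma success_prob_ge_rel_dev eps s1 s2 : 0 < eps < 1 -> 0 < s1%:R :> R -> 0 < s2%:R :> R ->
  1 - rel_dev_prob p_unif s1 dplusR (eps / 5)
    - rel_dev_prob p_reach s2 dminus_rs (eps / 5)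
    - rel_dev_prob p_reach s2 inv_rs (eps / 5) <= success_prob e L0 rs eps s1 s2.
Proof.
move=> eps01 s1_gt0 s2_gt0.
apply: expect_prod_ge_union.
- exact: sum_iid sum_p_unif s1.
- exact: sum_iid sum_p_reach s2.
- by move=> S; apply: (iid_ge0 p_unif_ge0).
- by move=> S; apply: (iid_ge0 p_reach_ge0).
move=> S1 S2 /=.
case: ifPn => [_|x_dev]; first by do 3 case: ifP; lra.
case: ifPn => [_|y_dev]; first by do 2 case: ifP; lra.
case: ifPn => [_|z_dev]; first by case: ifP; lra.
rewrite (ratio_estimate_in_range (s2 := s2%:R) eps01 (ler0n _ _) s1_gt0 s2_gt0
           expect_unif_dplus_gt0 expect_reach_dminus_gt0 expect_reach_inv_gt0
           card_Lge2_expect) ?subr0 //.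
- exact: rel_err_le (mulr_gt0 s1_gt0 expect_unif_dplus_gt0) x_dev.
- exact: rel_err_le (mulr_gt0 s2_gt0 expect_reach_dminus_gt0) y_dev.
- exact: rel_err_le (mulr_gt0 s2_gt0 expect_reach_inv_gt0) z_dev.
Qed.

Lemma success_prob_ge_sample delta eps s1 s2 : 0 < delta -> 0 < eps < 1 ->
  K1 / ((eps / 5) ^+ 2 * (delta / 3)) <= s1%:R ->
  K2 / ((eps / 5) ^+ 2 * (delta / 3)) <= s2%:R ->
  1 - delta <= success_prob e L0 rs eps s1 s2.
Proof.
move=> delta_gt0 eps01 hs1 hs2; have /andP[eps_gt0 _] := eps01.
have a_gt0 : 0 < eps / 5 by rewrite divr_gt0.
have b_gt0 : 0 < delta / 3 by rewrite divr_gt0.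
have dev1 := rel_dev_prob_le sum_p_unif p_unif_ge0 a_gt0 b_gt0
  expect_unif_dplus_gt0 expect_unif_dplus_sq hs1.
have dev2 := rel_dev_prob_le sum_p_reach p_reach_ge0 a_gt0 b_gt0
  expect_reach_dminus_gt0 expect_reach_dminus_sq hs2.
have dev3 := rel_dev_prob_le sum_p_reach p_reach_ge0 a_gt0 b_gt0
  expect_reach_inv_gt0 expect_reach_inv_sq hs2.
have s1_gt0 := rel_dev_sample_gt0 sum_p_unif p_unif_ge0 a_gt0 b_gt0
  expect_unif_dplus_gt0 expect_unif_dplus_sq hs1.
have s2_gt0 := rel_dev_sample_gt0 sum_p_reach p_reach_ge0 a_gt0 b_gt0
  expect_reach_inv_gt0 expect_reach_inv_sq hs2.
apply: le_trans (success_prob_ge_rel_dev eps01 s1_gt0 s2_gt0); lra.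
Qed.

End Periphery.

Theorem theoremA2 (R : realType) (delta : R) :
  0 < delta < 1 ->
  exists C : R, 0 < C /\
  forall (V : finType) (e : rel V), symmetric e -> irreflexive e ->
  forall (L0 : {set V}) (rs : V -> R) (eps : R),
  0 < eps < 1 ->
  (forall v, v \in Lge2 e L0 -> 0 < rs v) ->
  Lge2 e L0 != set0 ->
  0 < avg_nat R (dplus e L0) (L1 e L0) ->
  0 < avg_nat R (dminus e L0) (Lge2 e L0) ->
  forall s1 s2 : nat,
  C * ((max_nat (dplus e L0) (L1 e L0))%:R
         / (eps ^+ 2 * avg_nat R (dplus e L0) (L1 e L0))) <= s1%:R ->
  C * (c_rs rs (Lge2 e L0) * (max_nat (dminus e L0) (Lge2 e L0))%:R
         / (eps ^+ 2 * avg_nat R (dminus e L0) (Lge2 e L0))) <= s2%:R ->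
  1 - delta <= success_prob e L0 rs eps s1 s2.
Proof.
move=> /andP[delta_gt0 _]; exists (75 / delta); split; first by rewrite divr_gt0.
move=> V e _ _ L0 rs eps eps01 rs_gt0 Lge2_neq0 avg1_gt0 avg2_gt0 s1 s2.
have /andP[eps_gt0 _] := eps01.
have scale x y : 75 / delta * (x / (eps ^+ 2 * y)) =
                 x / y / ((eps / 5) ^+ 2 * (delta / 3)).
  by rewrite !invfM; move: y^-1 => y'; field; rewrite !gt_eqF.
rewrite !scale.
exact: (success_prob_ge_sample rs_gt0 Lge2_neq0 avg1_gt0 avg2_gt0 delta_gt0 eps01).
Qed.
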